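(* Let $p$ be a lambda skeleton and suppose $[\Gamma]t \in \Lambda_1^0(p)$ and $[\Delta]u \in \Lambda_1^0(p)$ are two planar lambda terms decorating the same skeleton $p$. Then $[\Gamma]t$ and $[\Delta]u$ are $\alpha$-equivalent.
   Context: Lambda skeletons: graded sets $\mathrm{SLam}(i)$, $i\in\mathbb{N}$, defined as the least sets such that $\_ \in \mathrm{SLam}(1)$; if $p\in\mathrm{SLam}(j)$ and $q\in\mathrm{SLam}(k)$ then $p(q)\in\mathrm{SLam}(j+k)$; if $p\in\mathrm{SLam}(i+1)$ then $\lambda\_.p\in\mathrm{SLam}(i)$. (They are unary-binary trees whose leaves are the placeholders $\_$.) A pseudo lambda term is a skeleton in which every occurrence of $\_$ (both leaves and the placeholders after $\lambda$) is replaced by a variable name. Given a list of variable names $\Gamma$ and a pseudo term $t$, the judgment $[\Gamma]t\in\Lambda_1^0(p)$ (''$t$ is a planar lambda term with free variables $\Gamma$ decorating $p$'') is defined by the rules: $[x]x\in\Lambda_1^0(\_)$; if $[\Gamma]t\in\Lambda_1^0(p)$ and $[\Delta]u\in\Lambda_1^0(q)$ then $[\Gamma,\Delta]t(u)\in\Lambda_1^0(p(q))$; if $[x,\Gamma]t\in\Lambda_1^0(p)$ then $[\Gamma]\lambda x.t\in\Lambda_1^0(\lambda\_.p)$. Two such terms $[\Gamma]t$, $[\Delta]u$ are $\alpha$-equivalent if one is obtained from the other by renaming variables (both the variables in the list of free variables and the variables bound by $\lambda$ inside the term). *)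

From Stdlib Require Import List.
Import ListNotations.
Set Implicit Arguments.

Inductive skel : Type :=
  | SHole : skel
  | SApp : skel -> skel -> skel
  | SAbs : skel -> skel.

Inductive SLam : nat -> skel -> Prop :=
  | SLam_hole : SLam 1 SHole
  | SLam_app : forall j k p q, SLam j p -> SLam k q -> SLam (j + k) (SApp p q)
  | SLam_abs : forall i p, SLam (S i) p -> SLam i (SAbs p).

Inductive pterm (V : Type) : Type :=
  | Var : V -> pterm V
  | App : pterm V -> pterm V -> pterm V
  | Lam : V -> pterm V -> pterm V.
Arguments Var {V} _.
Arguments App {V} _ _.
Arguments Lam {V} _ _.

Inductive planar {V : Type} : list V -> pterm V -> skel -> Prop :=
  | planar_var : forall x, planar [x] (Var x) SHole
  | planar_app : forall G D t u p q,
      planar G t p -> planar D u q -> planar (G ++ D) (App t u) (SApp p q)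
  | planar_lam : forall x G t p,
      planar (x :: G) t p -> planar G (Lam x t) (SAbs p).

(* Alpha-equivalence of planar terms: [Γ]t and [Δ]u are alpha-equivalent
   when u (with Δ) is obtained from t (with Γ) by renaming each declared
   variable (each entry of the free-variable list, each λ-binder) together
   with its occurrence.  [aeq ρ t u] records in ρ the pairs (old name, new
   name) of the free variables, positionally, as in the judgment rules. *)
Inductive aeq {V : Type} : list (V * V) -> pterm V -> pterm V -> Prop :=
  | aeq_var : forall x y, aeq [(x, y)] (Var x) (Var y)
  | aeq_app : forall r1 r2 t t' u u',
      aeq r1 t t' -> aeq r2 u u' -> aeq (r1 ++ r2) (App t u) (App t' u')
  | aeq_lam : forall x y r t t',
      aeq ((x, y) :: r) t t' -> aeq r (Lam x t) (Lam y t').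

Definition alpha_equiv {V : Type} (G : list V) (t : pterm V)
    (D : list V) (u : pterm V) : Prop :=
  exists r : list (V * V), map fst r = G /\ map snd r = D /\ aeq r t u.

(* By induction on the first derivation: the skeleton alone determines which
   rule ends a planar derivation and, for applications, how the context is
   split, so both derivations decompose in lockstep and the renamings of the
   pieces assemble into a renaming of the whole term. *)

From Stdlib Require Import List.
Import ListNotations.

Section AlphaEquiv.

Variable V : Type.

Lemma alpha_equiv_var (x y : V) : alpha_equiv [x] (Var x) [y] (Var y).
Proof.
  exists [(x, y)]; repeat split; constructor.
Qed.

Lemma alpha_equiv_app (G1 G2 D1 D2 : list V) (t1 t2 u1 u2 : pterm V) :
  alpha_equiv G1 t1 D1 u1 -> alpha_equiv G2 t2 D2 u2 ->
  alpha_equiv (G1 ++ G2) (App t1 t2) (D1 ++ D2) (App u1 u2).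
Proof.
  intros [r1 [<- [<- H1]]] [r2 [<- [<- H2]]].
  exists (r1 ++ r2); rewrite !map_app; repeat split; now constructor.
Qed.

Lemma alpha_equiv_lam (x y : V) (G D : list V) (t u : pterm V) :
  alpha_equiv (x :: G) t (y :: D) u -> alpha_equiv G (Lam x t) D (Lam y u).
Proof.
  intros [[|[x' y'] r] [HG [HD H]]]; [discriminate|].
  injection HG as <- <-; injection HD as <- <-.
  exists r; repeat split; now constructor.
Qed.

Lemma planar_alpha_equiv (G D : list V) (t u : pterm V) (p : skel) :
  planar G t p -> planar D u p -> alpha_equiv G t D u.
Proof.
  intros Ht; revert D u.
  induction Ht as [x | G1 G2 t1 t2 p1 p2 _ IH1 _ IH2 | x G t p _ IH];
    intros D u Hu; inversion Hu; subst.
  - apply alpha_equiv_var.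
  - apply alpha_equiv_app; auto.
  - apply alpha_equiv_lam; auto.
Qed.

End AlphaEquiv.

Theorem proposition2p4 (V : Type) (i : nat) (p : skel) (Hp : SLam i p)
    (G D : list V) (t u : pterm V) :
  planar G t p -> planar D u p -> alpha_equiv G t D u.
Proof.
  apply planar_alpha_equiv.
Qed.
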